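(* For every vector space $\mathcal X$ over $\mathbb K$, the exponential vector space $\mathscr L(\mathcal X)$ has a basis, i.e. $\mathscr L(\mathcal X)\smallsetminus[\mathscr L(\mathcal X)]_0$ has a basis.
   Context: $\mathbb K$ is $\mathbb R$ or $\mathbb C$. An exponential vector space (evs) over a field $K$ is a partially ordered set $(X,\leq)$ with a binary operation $+$ on $X$ and a map $K\times X\to X$, $(\alpha,x)\mapsto \alpha x$, such that: (A1) $(X,+)$ is a commutative semigroup with identity $\theta$; (A2) $x\leq y$ implies $x+z\leq y+z$ and $\alpha x\leq \alpha y$ for all $z\in X$, $\alpha\in K$; (A3) $\alpha(x+y)=\alpha x+\alpha y$, $\alpha(\beta x)=(\alpha\beta)x$, $(\alpha+\beta)x\leq \alpha x+\beta x$, $1x=x$; (A4) $\alpha x=\theta$ iff $\alpha=0$ or $x=\theta$; (A5) $x+(-1)x=\theta$ iff $x\in X_0$, where $X_0:=\{z\in X: y\not\leq z \text{ for all } y\in X\smallsetminus\{z\}\}$ (the set of minimal elements); (A6) for each $x\in X$ there is $p\in X_0$ with $p\leq x$. $\mathscr L(\mathcal X)$ is the set of all linear subspaces of $\mathcal X$ with $\mathcal X_1+\mathcal X_2:=\mathrm{span}(\mathcal X_1\cup\mathcal X_2)$, $\alpha\cdot\mathcal X_1:=\mathcal X_1$ if $\alpha\neq0$ and $0\cdot\mathcal X_1:=\{\theta\}$, and order given by inclusion; it is an evs over $\mathbb K$ with primitive space $\{\{\theta\}\}$. For $x\in X\smallsetminus X_0$ let $L(x):=\{z\in X: z\geq \alpha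 x+p \text{ for some } \alpha\in K\smallsetminus\{0\},\ p\in X_0\}$. A subset $B\subseteq X\smallsetminus X_0$ generates $X\smallsetminus X_0$ if $X\smallsetminus X_0=\bigcup_{b\in B}L(b)$. Elements $x,y\in X\smallsetminus X_0$ are orderly dependent if $x\in L(y)$ or $y\in L(x)$, and orderly independent otherwise; $B$ is orderly independent if any two distinct members are orderly independent. A basis of $X\smallsetminus X_0$ is an orderly independent generating subset. *)

From HB Require Import structures.
From mathcomp Require Import all_boot all_algebra.
From mathcomp Require Import reals.
From mathcomp Require Import complex.

Set Implicit Arguments.
Unset Strict Implicit.
Unset Printing Implicit Defensive.

Import GRing.Theory.
Local Open Scope ring_scope.

Section EVSNotions.
Variables (K : fieldType) (T : Type) (carrier : T -> Prop)
  (le : T -> T -> Prop) (add : T -> T -> T) (smul : K -> T -> T).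

Definition evs_prim (z : T) : Prop :=
  carrier z /\ forall y, carrier y -> y <> z -> ~ le y z.

Definition evs_L (x z : T) : Prop :=
  carrier z /\ exists (a : K) (p : T), a != 0 /\ evs_prim p /\ le (add (smul a x) p) z.

Definition evs_nonprim (x : T) : Prop := carrier x /\ ~ evs_prim x.

Definition evs_generates (B : T -> Prop) : Prop :=
  (forall b, B b -> evs_nonprim b) /\
  (forall z, evs_nonprim z <-> exists b, B b /\ evs_L b z).

Definition evs_orderly_dependent (x y : T) : Prop := evs_L y x \/ evs_L x y.

Definition evs_orderly_independent_set (B : T -> Prop) : Prop :=
  forall x y, B x -> B y -> x <> y -> ~ evs_orderly_dependent x y.

Definition evs_is_basis (B : T -> Prop) : Prop :=
  evs_generates B /\ evs_orderly_independent_set B.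

Definition evs_has_basis : Prop := exists B, evs_is_basis B.

End EVSNotions.

Section SubspaceEVS.
Variables (K : fieldType) (V : lmodType K).

Definition is_subspace (S : V -> Prop) : Prop :=
  S 0 /\ (forall u v, S u -> S v -> S (u + v)) /\
  (forall (a : K) v, S v -> S (a *: v)).

Definition span_set (A : V -> Prop) : V -> Prop :=
  fun v => forall W, is_subspace W -> (forall u, A u -> W u) -> W v.

Definition Lsub_le (A B : V -> Prop) : Prop := forall v, A v -> B v.

Definition Lsub_add (A B : V -> Prop) : V -> Prop :=
  span_set (fun v => A v \/ B v).

Definition Lsub_smul (a : K) (A : V -> Prop) : V -> Prop :=
  if a == 0 then (fun v => v = 0) else A.

Definition Lsub_has_basis : Prop :=
  evs_has_basis is_subspace Lsub_le Lsub_add Lsub_smul.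

End SubspaceEVS.

From HB Require Import structures.
From mathcomp Require Import all_boot all_algebra.
From mathcomp Require Import reals.
From mathcomp Require Import complex.
From Stdlib Require Import Classical FunctionalExtensionality PropExtensionality.

(* The primitive space of L(V) is {{0}} and L(S) consists of the subspaces
   containing S, so the lines spanned by nonzero vectors form a basis: every
   nonzero subspace contains such a line, and two lines comparable by inclusion
   coincide. *)

Local Open Scope ring_scope.
Import GRing.Theory.

Section SubspaceBasis.
Variables (K : fieldType) (V : lmodType K).

Notation subspace := (@is_subspace K V).
Notation prim := (evs_prim subspace (@Lsub_le K V)).
Notation nonprim := (evs_nonprim subspace (@Lsub_le K V)).
Notation LL := (evs_L subspace (@Lsub_le K V) (@Lsub_add K V) (@Lsub_smul K V)).

Definition sub0 : V -> Prop := fun v => v = 0.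

Definition line (v : V) : V -> Prop := fun w => exists k : K, w = k *: v.

Definition nonzero_lines (S : V -> Prop) : Prop := exists2 v, v != 0 & S = line v.

Lemma subspace_ext (A B : V -> Prop) : Lsub_le A B -> Lsub_le B A -> A = B.
Proof.
move=> AB BA; apply: functional_extensionality => v.
by apply: propositional_extensionality; split; [apply: AB | apply: BA].
Qed.

Lemma subspace0 (S : V -> Prop) : subspace S -> S 0.
Proof. by case. Qed.

Lemma is_subspace0 : subspace sub0.
Proof.
split; first by [].
split; first by move=> u v -> ->; rewrite addr0.
by move=> a v ->; rewrite scaler0.
Qed.

Lemma is_subspace_line v : subspace (line v).
Proof.
split; first by exists 0; rewrite scale0r.
split; first by move=> u w [k ->] [l ->]; exists (k + l); rewrite scalerDl.
by move=> a w [k ->]; exists (a * k); rewrite scalerA.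
Qed.

Lemma line_id v : line v v.
Proof. by exists 1; rewrite scale1r. Qed.

Lemma Lsub_primE S : prim S <-> S = sub0.
Proof.
split=> [[subS minS] | ->].
  apply: NNPP => S_neq0; apply: (minS sub0 is_subspace0).
    by move=> E; apply: S_neq0.
  by move=> v ->; apply: subspace0.
split=> [|W subW W_neq0 W_le0]; first exact: is_subspace0.
by apply: W_neq0; apply: subspace_ext => // v ->; apply: subspace0.
Qed.

Lemma Lsub_nonprimE S : nonprim S <-> subspace S /\ exists2 v, S v & v != 0.
Proof.
split=> [[subS S_nprim] | [subS [v Sv v_neq0]]]; split=> //.
  apply: NNPP => no_nz; apply: S_nprim; apply/Lsub_primE.
  apply: subspace_ext => [v Sv | v ->]; last exact: subspace0.
  by apply/eqP; apply: NNPP => /negP v_neq0; apply: no_nz; exists v.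
by move/Lsub_primE => E; move: Sv v_neq0; rewrite E /sub0 => ->; rewrite eqxx.
Qed.

(* The witness for the converse direction is the scalar 1 and the point {0} of the
   primitive space: 1 * B + {0} is the span of B, which lies in every subspace
   containing B. *)
Lemma Lsub_LE B S : LL B S <-> subspace S /\ Lsub_le B S.
Proof.
split=> [[subS [a [p [a_neq0 [_ le_S]]]]] | [subS le_BS]].
  split=> // v Bv; apply: le_S => W _ W_ge; apply: W_ge.
  by rewrite /Lsub_smul (negbTE a_neq0); left.
split=> //; exists 1, sub0; split; first exact: oner_neq0.
split; first exact/Lsub_primE.
rewrite /Lsub_smul oner_eq0 => v span_v; apply: span_v => // u [/le_BS // | ->].
exact: subspace0.
Qed.

Lemma nonprim_line v : v != 0 -> nonprim (line v).
Proof.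
move=> v_neq0; apply/Lsub_nonprimE; split; first exact: is_subspace_line.
by exists v; first exact: line_id.
Qed.

Lemma line_le_eq u v : u != 0 -> Lsub_le (line u) (line v) -> line u = line v.
Proof.
move=> u_neq0 le_uv; have [k Eu] := le_uv u (line_id u).
have k_neq0 : k != 0 by apply: contraNneq u_neq0 => k0; rewrite Eu k0 scale0r.
apply: subspace_ext => // _ [l ->].
by exists (l / k); rewrite Eu scalerA mulfVK.
Qed.

Lemma nonzero_lines_generate :
  evs_generates subspace (@Lsub_le K V) (@Lsub_add K V) (@Lsub_smul K V) nonzero_lines.
Proof.
split=> [_ [v v_neq0 ->] | S]; first exact: nonprim_line.
split=> [/Lsub_nonprimE [subS [v Sv v_neq0]] | [_ [[v v_neq0 ->] /Lsub_LE [subS le_vS]]]].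
  exists (line v); split; first by exists v.
  by apply/Lsub_LE; split=> // _ [k ->]; case: subS => _ [_]; apply.
by apply/Lsub_nonprimE; split=> //; exists v; first exact/le_vS/line_id.
Qed.

Lemma nonzero_lines_independent :
  evs_orderly_independent_set subspace (@Lsub_le K V) (@Lsub_add K V) (@Lsub_smul K V)
    nonzero_lines.
Proof.
move=> _ _ [u u_neq0 ->] [v v_neq0 ->] neq_uv.
by case=> /Lsub_LE [_ le_lines]; apply: neq_uv;
  [symmetry; apply: line_le_eq | apply: line_le_eq].
Qed.

Lemma Lsub_has_basis_field : Lsub_has_basis V.
Proof.
exists nonzero_lines.
by split; [apply: nonzero_lines_generate | apply: nonzero_lines_independent].
Qed.

End SubspaceBasis.

Theorem mainTheorem12 (R : realType) :
  (forall V : lmodType R, Lsub_has_basis V) /\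
  (forall V : lmodType R[i], Lsub_has_basis V).
Proof. by split=> V; apply: Lsub_has_basis_field. Qed.
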